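(* Let $\alpha=\tfrac12$, $K>0$, and let $\{\mu_n\}_{n\in\mathbb N}$ and $\mu$ be in $\mathcal P(\mathbb T\times\mathbb R)$ with $\mu_n\to\mu$ narrowly. Then $$\lim_{n\to\infty}\sup_{\Omega\in\mathbb R}|\mathcal V[\mu_n](z,\Omega)-\mathcal V[\mu](z,\Omega)|=0$$ for every $z\in\mathbb T$ which is a continuity point of the marginal $(\pi_z)_\#\mu$ (i.e. $(\pi_z)_\#\mu(\{z\})=0$). In particular this holds for almost every $z\in\mathbb T$.
   Context: $\mathbb T$ is the unit circle identified with $(-\pi,\pi]$ via $z=e^{i\theta}$; $|\theta|_o$ = absolute value of the representative of $\theta$ mod $2\pi$ in $(-\pi,\pi]$; $\pi_z(z,\Omega)=z$. Critical kernel $h(\theta)=\sin\theta/|\theta|_o$, $\theta\notin2\pi\mathbb Z$. For a finite measure $\mu$: $\mathcal P[\mu](\theta,\Omega)=\Omega-K\int_{(\mathbb T\setminus\{e^{i\theta}\})\times\mathbb R}h(\theta-\theta')\,d\mu(\theta',\Omega')$ and $\mathcal V[\mu](z,\Omega)=(\mathcal P[\mu](z,\Omega)\,iz,0)$, a tangent vector to $\mathbb T\times\mathbb R$ at $(z,\Omega)$, whose norm is taken in the product Riemannian metric. Narrow convergence means convergence against all bounded continuous functions. *)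

From HB Require Import structures.
From mathcomp Require Import all_boot all_order all_algebra.
From mathcomp Require Import all_classical all_reals all_analysis.
Set Implicit Arguments. Unset Strict Implicit. Unset Printing Implicit Defensive.
Import Order.TTheory GRing.Theory Num.Theory.
Import numFieldNormedType.Exports.
Local Open Scope classical_set_scope.
Local Open Scope ring_scope.

(* T is identified with (-pi, pi] via z = e^{i theta}; a point of T x R is
   represented by (theta, Omega) : R * R.  A probability measure on T x R is
   a probability measure on R * R concentrated on (-pi,pi] x R. *)

Section Defs.
Variable R : realType.

Definition ang_rep (x : R) : R :=
  x - 2 * pi * (Num.ceil ((x - pi) / (2 * pi)))%:~R.

Definition ang_abs (x : R) : R := `| ang_rep x |.

(* critical kernel, alpha = 1/2 : h(x) = sin x / |x|_o^{2 alpha} = sin x / |x|_o *)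
Definition hcrit (x : R) : R := sin x / ang_abs x.

Definition is_probTR (mu : probability (R * R)%type R) : Prop :=
  mu (`]-pi, pi] `*` setT) = 1%E.

Definition Pfield (K : R) (mu : probability (R * R)%type R) (theta Omega : R) : R :=
  Omega - K * Rintegral mu [set p : R * R | ang_abs (theta - p.1) != 0]
                         (fun p => hcrit (theta - p.1)).

(* tangent vectors to T x R at (z, Omega), with T embedded in R^2 as
   z = (cos theta, sin theta); a tangent vector is (a, b, c) with (a,b)
   tangent to T at z and c tangent to R.  iz = (- sin theta, cos theta). *)
Definition Vfield (K : R) (mu : probability (R * R)%type R) (theta Omega : R)
  : R * R * R :=
  (Pfield K mu theta Omega * (- sin theta),
   Pfield K mu theta Omega * cos theta, 0).

Definition tnorm (v : R * R * R) : R :=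
  Num.sqrt (v.1.1 ^+ 2 + v.1.2 ^+ 2 + v.2 ^+ 2).

Definition tsub (v w : R * R * R) : R * R * R :=
  (v.1.1 - w.1.1, v.1.2 - w.1.2, v.2 - w.2).

(* narrow convergence on T x R: against all bounded continuous functions
   on T x R, i.e. bounded continuous functions of (theta, Omega) that are
   2pi-periodic in theta *)
Definition narrow_cvg (mun : nat -> probability (R * R)%type R)
  (mu : probability (R * R)%type R) : Prop :=
  forall f : R * R -> R,
    continuous f ->
    (exists M : R, forall p, `| f p | <= M) ->
    (forall th Om, f (th + 2 * pi, Om) = f (th, Om)) ->
    (fun n => Rintegral (mun n) setT f) @ \oo --> Rintegral mu setT f.

Definition supdiff (K : R) (nu mu : probability (R * R)%type R) (theta : R)
  : \bar R :=
  ereal_sup [set (tnorm (tsub (Vfield K nu theta Om) (Vfield K mu theta Om)))%:E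
            | Om in [set: R]].

End Defs.

From HB Require Import structures.
From mathcomp Require Import all_boot all_order all_algebra.
From mathcomp Require Import all_classical all_reals all_analysis.
From mathcomp Require Import lra ring zify.
Import Order.TTheory GRing.Theory Num.Theory.
Import numFieldNormedType.Exports.
Local Open Scope classical_set_scope.
Local Open Scope ring_scope.
Set Implicit Arguments. Unset Strict Implicit. Unset Printing Implicit Defensive.

(* Since P[mu](theta, Omega) = Omega - K * \int h(theta - theta') dmu, the
   difference of the two vector fields does not depend on Omega and has norm
   K |\int h(theta - .) d(mu_n - mu)|.  The kernel h(y) = sin y / |y|_o is
   bounded by 1 and continuous off |y|_o = 0, i.e. off the fibre theta' = theta.
   Approximate it by the continuous periodic kernels sin y / (s + |y|_o), whose
   error is at most s / (s + |y|_o): narrow convergence applies to the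
   approximants, and by dominated convergence the error integral against mu
   tends to 0 with s as soon as mu does not charge the fibre over theta.
   A probability measure charges at most countably many fibres, hence the
   exceptional set is Lebesgue-negligible. *)

Lemma periodicz (U V : zmodType) (f : U -> V) (T : U) :
  periodic f T -> forall a (k : int), f (a + T *~ k) = f a.
Proof.
move=> fT a [n|n]; first exact: periodicn.
by rewrite NegzE mulrNz -[in RHS](subrK (T *+ n.+1) a) periodicn.
Qed.

Section Angle.
Variable R : realType.
Implicit Types x y : R.

Let pi2_gt0 : 0 < 2 * pi :> R.
Proof. by rewrite mulr_gt0 // pi_gt0. Qed.

Let pi2_le_norm_mulz (k : int) : k != 0 -> 2 * pi <= `|2 * pi * k%:~R : R|.
Proof.
by move=> k0; rewrite normrM gtr0_norm // ler_peMr ?(ltW pi2_gt0) // -intr_norm ler1z; lia.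
Qed.

Lemma ang_repE x :
  x = ang_rep x + 2 * pi * (Num.ceil ((x - pi) / (2 * pi)))%:~R.
Proof. by rewrite /ang_rep subrK. Qed.

Lemma ang_rep_itv x : - pi < ang_rep x <= pi.
Proof.
rewrite /ang_rep; set c := Num.ceil _.
have /andP[] := ceil_itv ((x - pi) / (2 * pi)); rewrite -/c intrB.
rewrite ltr_pdivlMr // ler_pdivrMr // => c1 c2.
by apply/andP; split; nra.
Qed.

Lemma ang_repDz x (k : int) : ang_rep (x + 2 * pi * k%:~R) = ang_rep x.
Proof.
rewrite /ang_rep.
have -> : (x + 2 * pi * k%:~R - pi) / (2 * pi) = (x - pi) / (2 * pi) + k%:~R.
  by rewrite addrAC mulrDl [2 * pi * _]mulrC mulfK ?gt_eqF.
by rewrite ceilDrz ?intr_int // intrKceil intrD; ring.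
Qed.

Lemma ang_abs_periodic : periodic (@ang_abs R) (pi *+ 2).
Proof. by move=> x; rewrite /ang_abs -(ang_repDz x 1) mulr1 mulr_natl. Qed.

Lemma sin_ang_rep x : sin (ang_rep x) = sin x.
Proof.
have sin_periodic : periodic (@sin R) (2 * pi) by rewrite mulr_natl; exact: sinD2pi.
by rewrite [in RHS](ang_repE x) mulrzr periodicz.
Qed.

Lemma norm_sin_le x : `|sin x| <= `|x|.
Proof.
suff pos y : 0 < y -> `|sin y| <= `|y|.
  have [x0|x0|->] := ltgtP x 0; last by rewrite sin0 normr0.
    by rewrite -normrN -sinN -(normrN x) pos ?oppr_gt0.
  exact: pos.
move=> y0; have [c _] := @MVT R sin cos 0 y y0 (fun z _ => is_derive_sin z)
  (continuous_subspaceT (@continuous_sin R)).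
by rewrite sin0 !subr0 => ->; rewrite normrM ler_piMl // cos_max.
Qed.

Lemma norm_sin_le_ang_abs x : `|sin x| <= ang_abs x.
Proof. by rewrite -sin_ang_rep; exact: norm_sin_le. Qed.

Lemma ang_abs_le_norm x : ang_abs x <= `|x|.
Proof.
rewrite /ang_abs [in leRHS](ang_repE x); set c := Num.ceil _.
have [->|c0] := eqVneq c 0; first by rewrite mulr0 addr0.
have /andP[r1 r2] := ang_rep_itv x.
have rpi : `|ang_rep x| <= pi by rewrite ler_norml r2 andbT ltW.
have := pi2_le_norm_mulz c0.
have := lerB_normD (2 * pi * c%:~R) (ang_rep x); rewrite [_ + ang_rep x]addrC.
lra.
Qed.

Lemma ang_abs_lipschitz x y : ang_abs y <= ang_abs x + `|y - x|.
Proof.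
have xE := ang_repE x; set c := Num.ceil _ in xE.
have -> : ang_abs y = ang_abs (y - x + ang_rep x).
  by rewrite /ang_abs -(ang_repDz y (- c)) {1}xE intrN mulrN; congr `|ang_rep _|; lra.
by rewrite (le_trans (ang_abs_le_norm _)) // addrC ler_normD.
Qed.

Lemma continuous_ang_abs : continuous (@ang_abs R).
Proof.
move=> x; apply/cvgrPdist_lt => e e0; near=> y.
have : `|x - y| < e by near: y; exact: cvgr_dist_lt.
have := ang_abs_lipschitz x y; have := ang_abs_lipschitz y x.
rewrite [`|y - x|]distrC => ? ? ?.
by rewrite ltr_norml; apply/andP; split; lra.
Unshelve. all: by end_near.
Qed.

Lemma ang_abs_eq0 x y : x \in `]-pi, pi] -> y \in `]-pi, pi] ->
  ang_abs (x - y) = 0 -> x = y.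
Proof.
rewrite !in_itv /= => /andP[x1 x2] /andP[y1 y2] /normr0_eq0 rep0.
have := ang_repE (x - y); rewrite rep0 add0r; set c := Num.ceil _ => xy.
have [c0|c0] := eqVneq c 0; first by apply/eqP; rewrite -subr_eq0 xy c0 mulr0.
have : 2 * pi <= `|x - y| by rewrite xy; exact: pi2_le_norm_mulz.
by rewrite ler_normr => /orP[]; lra.
Qed.

End Angle.

Section Kernel.
Variable R : realType.
Implicit Types s y : R.

Definition hcrit_reg s y : R := sin y / (s + ang_abs y).
Definition hcrit_err s y : R := s / (s + ang_abs y).

Lemma hcrit_bound y : `|hcrit y| <= 1.
Proof.
rewrite /hcrit; have [->|a0] := eqVneq (ang_abs y) 0.
  by rewrite invr0 mulr0 normr0.
rewrite normrM normfV (ger0_norm (normr_ge0 _)) ler_pdivrMr ?mul1r.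
  exact: norm_sin_le_ang_abs.
by rewrite lt0r a0 normr_ge0.
Qed.

Lemma sin_eq0_ang_abs y : ang_abs y = 0 -> sin y = 0.
Proof.
by move=> a0; apply/normr0_eq0/le_anti; rewrite normr_ge0 -a0 norm_sin_le_ang_abs.
Qed.

Section Regularization.
Variable s : R.
Hypothesis s_gt0 : 0 < s.

Let den_gt0 y : 0 < s + ang_abs y.
Proof. by rewrite ltr_pwDl // normr_ge0. Qed.

Lemma hcrit_reg_bound y : `|hcrit_reg s y| <= 1.
Proof.
rewrite /hcrit_reg normrM normfV (gtr0_norm (den_gt0 y)) ler_pdivrMr // mul1r.
by rewrite (le_trans (norm_sin_le_ang_abs y)) // lerDr ltW.
Qed.

Lemma hcrit_err_ge0 y : 0 <= hcrit_err s y.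
Proof. by rewrite divr_ge0 // ltW. Qed.

Lemma hcrit_err_bound y : `|hcrit_err s y| <= 1.
Proof.
by rewrite ger0_norm ?hcrit_err_ge0 // ler_pdivrMr // mul1r lerDl normr_ge0.
Qed.

Lemma hcrit_reg_err y : `|hcrit y - hcrit_reg s y| <= hcrit_err s y.
Proof.
have [a0|a0] := eqVneq (ang_abs y) 0.
  by rewrite /hcrit_reg /hcrit a0 sin_eq0_ang_abs // !mul0r subr0 normr0 hcrit_err_ge0.
have -> : hcrit y - hcrit_reg s y = hcrit y * hcrit_err s y.
  rewrite /hcrit_reg /hcrit_err /hcrit; move: (den_gt0 y) a0.
  by set a := ang_abs y => /gt_eqF d0 a0; field; rewrite a0 d0.
by rewrite normrM (ger0_norm (hcrit_err_ge0 y)) ler_piMl ?hcrit_err_ge0 ?hcrit_bound.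
Qed.

Let continuous_den_inv : continuous (fun y => (s + ang_abs y)^-1).
Proof.
move=> y; apply: (@continuousV _ _ (fun y => s + ang_abs y)); first by rewrite gt_eqF.
apply: (@continuousD _ _ _ (cst s) (@ang_abs R)); first exact: cvg_cst.
exact: continuous_ang_abs.
Qed.

Lemma continuous_hcrit_reg : continuous (hcrit_reg s).
Proof.
move=> y; apply: (@continuousM _ _ sin); first exact: continuous_sin.
exact: continuous_den_inv.
Qed.

Lemma continuous_hcrit_err : continuous (hcrit_err s).
Proof.
move=> y; apply: (@continuousM _ _ (fun=> s) (fun y => (s + ang_abs y)^-1)).
  exact: cvg_cst.
exact: continuous_den_inv.
Qed.

Lemma measurable_hcrit_reg : measurable_fun setT (hcrit_reg s).
Proof. exact: measurable_realfun.continuous_measurable_fun continuous_hcrit_reg. Qed.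

Lemma measurable_hcrit_err : measurable_fun setT (hcrit_err s).
Proof. exact: measurable_realfun.continuous_measurable_fun continuous_hcrit_err. Qed.

Lemma hcrit_reg_periodic : periodic (hcrit_reg s) (pi *+ 2).
Proof. by move=> y; rewrite /hcrit_reg ang_abs_periodic sinD2pi. Qed.

Lemma hcrit_err_periodic : periodic (hcrit_err s) (pi *+ 2).
Proof. by move=> y; rewrite /hcrit_err ang_abs_periodic. Qed.

End Regularization.

Let cvg_den_inv y : ang_abs y != 0 ->
  (harmonic k + ang_abs y)^-1 @[k --> \oo] --> (ang_abs y)^-1.
Proof.
move=> a0; apply: cvgV => //; rewrite -[X in _ --> X]add0r.
by apply: cvgD; [exact: cvg_harmonic | exact: cvg_cst].
Qed.

Lemma hcrit_err_cvg0 y : ang_abs y != 0 -> hcrit_err (harmonic k) y @[k --> \oo] --> 0.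
Proof.
move=> a0; rewrite -(mul0r (ang_abs y)^-1).
by apply: cvgM; [exact: cvg_harmonic | exact: cvg_den_inv].
Qed.

Lemma hcrit_reg_cvg y : hcrit_reg (harmonic k) y @[k --> \oo] --> hcrit y.
Proof.
have [a0|a0] := eqVneq (ang_abs y) 0.
  rewrite /hcrit_reg /hcrit sin_eq0_ang_abs // mul0r.
  by under eq_fun do rewrite mul0r; exact: cvg_cst.
by apply: cvgM; [exact: cvg_cst | exact: cvg_den_inv].
Qed.

Lemma measurable_hcrit : measurable_fun setT (@hcrit R).
Proof.
apply: (measurable_realfun.measurable_fun_cvg (h := fun k => hcrit_reg (harmonic k))).
  by move=> k; exact: measurable_hcrit_reg (harmonic_gt0 k).
by move=> y _; exact: hcrit_reg_cvg.
Qed.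

End Kernel.

Lemma cvg_approx (R : realFieldType) (u : nat -> R) (l : R)
    (v w : nat -> nat -> R) (lv lw : nat -> R) :
  (forall k n, `|u n - v k n| <= w k n) -> (forall k, `|l - lv k| <= lw k) ->
  (forall k, v k n @[n --> \oo] --> lv k) -> (forall k, w k n @[n --> \oo] --> lw k) ->
  lw k @[k --> \oo] --> 0 -> u n @[n --> \oo] --> l.
Proof.
move=> uv llv vlv wlw lw0; apply/cvgrPdist_lt => e e0.
have e5 : 0 < e / 5 by rewrite divr_gt0.
near \oo => k.
have lwk : `|0 - lw k| < e / 5 by near: k; exact: (cvgr_dist_lt _ _ lw0 _ e5).
near=> n.
have vkn : `|lv k - v k n| < e / 5 by near: n; exact: (cvgr_dist_lt _ _ (vlv k) _ e5).
have wkn : `|lw k - w k n| < e / 5 by near: n; exact: (cvgr_dist_lt _ _ (wlw k) _ e5).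
move: lwk vkn wkn (uv k n) (llv k); rewrite !ltr_norml !ler_norml.
move=> /andP[? ?] /andP[? ?] /andP[? ?] /andP[? ?] /andP[? ?].
by apply/andP; split; lra.
Unshelve. all: by end_near.
Qed.

Section Integration.
Context d (T : measurableType d) (R : realType).
Local Notation RI mu f := (Rintegral mu setT f).

Lemma integrable_bounded (P : probability T R) (f : T -> R) (M : R) :
  measurable_fun setT f -> (forall x, `|f x| <= M) -> P.-integrable setT (EFin \o f).
Proof.
move=> mf fM; apply: measurable_bounded_integrable => //.
  by rewrite (le_lt_trans (probability_le1 P measurableT)) ?ltry.
by exists M; split; [exact: num_real | move=> N MN x _; exact: le_trans (fM x) (ltW MN)].
Qed.

Lemma Rintegral_dist_le (mu : measure T R) (f g c : T -> R) :
  mu.-integrable setT (EFin \o f) -> mu.-integrable setT (EFin \o g) ->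
  mu.-integrable setT (EFin \o c) -> (forall x, `|f x - g x| <= c x) ->
  `|RI mu f - RI mu g| <= RI mu c.
Proof.
move=> If Ig Ic fgc.
have Ifg : mu.-integrable setT (EFin \o (f \- g)).
  by apply: eq_integrable measurableT _ _ _ (integrableB measurableT If Ig) => x _.
rewrite -RintegralB // (le_trans (le_normr_Rintegral _ Ifg)) //.
by apply: le_Rintegral => //; [exact: (integrable_norm Ifg) | move=> x _; exact: fgc].
Qed.

Lemma Rintegral_cvg0_dominated (P : probability T R) (f : nat -> T -> R) (M : R) :
  (forall k, measurable_fun setT (f k)) -> (forall k x, `|f k x| <= M) ->
  {ae P, forall x, f k x @[k --> \oo] --> 0} -> RI P (f k) @[k --> \oo] --> 0.
Proof.
move=> mf fM f0.
have IM : P.-integrable setT (EFin \o cst M).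
  exact: (@integrable_bounded P (cst M) `|M| (measurable_cst M) (fun _ => lexx _)).
have f0E : {ae P, forall x, setT x -> (f k x)%:E @[k --> \oo] --> 0%E}.
  by apply: filterS f0 => x fx _; apply: cvg_EFin fx; exact: nearW.
have [_ _] := @dominated_convergence _ _ _ P setT measurableT
  (fun k => EFin \o f k) (cst 0%E) (EFin \o cst M)
  (fun k => (measurable_realfun.measurable_EFinP _ _).2 (mf k)) (measurable_cst _)
  f0E IM (aeW _ (fun x k _ => fM k x)).
by rewrite integral0; exact: fine_cvg.
Qed.

End Integration.

Section KernelIntegral.
Variable R : realType.
Local Notation RI mu f := (Rintegral mu setT f).
Implicit Types (F : R -> R) (theta K : R) (P mu nu : probability (R * R)%type R)
  (mun : nat -> probability (R * R)%type R).

Definition kernel_at F theta (p : R * R) : R := F (theta - p.1).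

Lemma measurable_kernel_at F theta :
  measurable_fun setT F -> measurable_fun setT (kernel_at F theta).
Proof.
move=> mF; apply: (measurableT_comp mF).
exact: measurable_realfun.measurable_funB (measurable_cst _) measurable_fst.
Qed.

Lemma integrable_kernel_at P F theta (M : R) : measurable_fun setT F ->
  (forall y, `|F y| <= M) -> P.-integrable setT (EFin \o kernel_at F theta).
Proof.
by move=> mF FM; apply: (integrable_bounded P (measurable_kernel_at theta mF)) => p; exact: FM.
Qed.

Lemma narrow_cvg_kernel_at mun mu F theta (M : R) :
  narrow_cvg mun mu -> continuous F -> (forall y, `|F y| <= M) ->
  periodic F (pi *+ 2) ->
  RI (mun n) (kernel_at F theta) @[n --> \oo] --> RI mu (kernel_at F theta).
Proof.
move=> cvg_mu cF FM perF; apply: cvg_mu.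
- move=> p; apply: (@continuous_comp _ _ _ (fun p : R * R => theta - p.1) F).
    by apply: cvgB; [exact: cvg_cst | exact: cvg_fst].
  exact: cF.
- by exists M => p; exact: FM.
- by move=> th Om; rewrite /kernel_at /= mulr_natl -[LHS]perF; congr F; lra.
Qed.

Lemma Rintegral_hcrit_reg_dist P theta (s : R) : 0 < s ->
  `|RI P (kernel_at (@hcrit R) theta) - RI P (kernel_at (hcrit_reg s) theta)|
    <= RI P (kernel_at (hcrit_err s) theta).
Proof.
move=> s0; apply: Rintegral_dist_le => [|||p]; last exact: hcrit_reg_err.
- exact: integrable_kernel_at (@measurable_hcrit R) (@hcrit_bound R).
- exact: integrable_kernel_at (measurable_hcrit_reg s0) (hcrit_reg_bound s0).
- exact: integrable_kernel_at (measurable_hcrit_err s0) (hcrit_err_bound s0).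
Qed.

Lemma measurable_fst_preimage1 theta :
  measurable (fst @^-1` [set theta] : set (R * R)).
Proof. by rewrite -[X in measurable X]setTI; exact: measurable_fst. Qed.

Lemma Rintegral_hcrit_err_cvg0 P theta : is_probTR P -> theta \in `]-pi, pi] ->
  P (fst @^-1` [set theta]) = 0%E ->
  RI P (kernel_at (hcrit_err (harmonic k)) theta) @[k --> \oo] --> 0.
Proof.
move=> strip theta_itv atom0.
have mS : measurable (`]-pi, pi] `*` setT : set (R * R)).
  exact: measurableX (measurable_itv _) measurableT.
apply: (@Rintegral_cvg0_dominated _ _ _ _ _ 1) => [k|k p|].
- exact: measurable_kernel_at (measurable_hcrit_err (harmonic_gt0 k)).
- exact: (hcrit_err_bound (@harmonic_gt0 R k)).
exists (fst @^-1` [set theta] `|` ~` (`]-pi, pi] `*` setT)); split.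
- exact: measurableU (measurable_fst_preimage1 _) (measurableC mS).
- apply: (null_set_setU (measurable_fst_preimage1 _) (measurableC mS) atom0).
  by have := probability_setC P mS; rewrite strip subee; exact.
move=> p /= p_ncvg; apply: contrapT => /not_orP[p1 /contrapT p2]; apply: p_ncvg.
apply: hcrit_err_cvg0; apply/eqP => /ang_abs_eq0 eq_theta.
by apply: p1; rewrite eq_theta //; case: p2; rewrite /= in_itv.
Qed.

Lemma narrow_cvg_hcrit_kernel mun mu theta :
  narrow_cvg mun mu -> is_probTR mu -> theta \in `]-pi, pi] ->
  mu (fst @^-1` [set theta]) = 0%E ->
  RI (mun n) (kernel_at (@hcrit R) theta) @[n --> \oo] -->
    RI mu (kernel_at (@hcrit R) theta).
Proof.
move=> cvg_mu strip theta_itv atom0.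
apply: (cvg_approx
  (v := fun k n => RI (mun n) (kernel_at (hcrit_reg (harmonic k)) theta))
  (w := fun k n => RI (mun n) (kernel_at (hcrit_err (harmonic k)) theta))).
- by move=> k n; exact: Rintegral_hcrit_reg_dist (@harmonic_gt0 R k).
- by move=> k; exact: Rintegral_hcrit_reg_dist (@harmonic_gt0 R k).
- move=> k; apply: narrow_cvg_kernel_at cvg_mu _ (hcrit_reg_bound (@harmonic_gt0 R k)) _.
    exact: continuous_hcrit_reg (@harmonic_gt0 R k).
  exact: hcrit_reg_periodic.
- move=> k; apply: narrow_cvg_kernel_at cvg_mu _ (hcrit_err_bound (@harmonic_gt0 R k)) _.
    exact: continuous_hcrit_err (@harmonic_gt0 R k).
  exact: hcrit_err_periodic.
- exact: Rintegral_hcrit_err_cvg0.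
Qed.

Lemma Pfield_kernel K P theta Om :
  Pfield K P theta Om = Om - K * RI P (kernel_at (@hcrit R) theta).
Proof.
rewrite /Pfield Rintegral_mkcond; congr (_ - _ * Rintegral _ _ _); apply/funext => p.
rewrite /kernel_at patchE; case: ifPn => // /negP p_out.
have a0 : ang_abs (theta - p.1) = 0.
  by apply: contrapT => ?; apply: p_out; rewrite inE; exact/eqP.
by rewrite /hcrit a0 invr0 mulr0.
Qed.

Lemma supdiff_kernel K nu mu theta : supdiff K nu mu theta =
  `|K * (RI mu (kernel_at (@hcrit R) theta) - RI nu (kernel_at (@hcrit R) theta))|%:E.
Proof.
set I := RI mu _; set J := RI nu _.
have normE Om :
    tnorm (tsub (Vfield K nu theta Om) (Vfield K mu theta Om)) = `|K * (I - J)|.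
  rewrite /tnorm /tsub /Vfield /= !Pfield_kernel -/I -/J subrr expr0n addr0.
  rewrite -!mulrBl !exprMn sqrrN -mulrDr [_ + cos _ ^+ 2]addrC cos2Dsin2 mulr1.
  by rewrite -sqrtr_sqr; congr (Num.sqrt (_ ^+ 2)); ring.
rewrite /supdiff (_ : [set _ | Om in _] = [set `|K * (I - J)|%:E]) ?ereal_sup1 //.
apply/seteqP; split => [_ [Om _ <-]|_ ->] /=; first by rewrite normE.
by exists 0 => //; rewrite normE.
Qed.

Lemma supdiff_cvg0 K mun mu theta :
  RI (mun n) (kernel_at (@hcrit R) theta) @[n --> \oo] -->
    RI mu (kernel_at (@hcrit R) theta) ->
  supdiff K (mun n) mu theta @[n --> \oo] --> 0%E.
Proof.
move=> cvg_I; under eq_fun do rewrite supdiff_kernel.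
apply: cvg_EFin; first exact: nearW.
rewrite -(@normr0 _ R) -(mulr0 K) -(subrr (RI mu (kernel_at (@hcrit R) theta))).
by apply: cvg_norm; apply: cvgMr; apply: cvgB => //; exact: cvg_cst.
Qed.

End KernelIntegral.

(* [fst] as a random variable, so that [pmf_gt0_countable] counts the atoms. *)
HB.instance Definition _ (R : realType) :=
  @isMeasurableFun.Build _ _ (R * R)%type R fst (@measurable_fst _ _ R R).

Lemma negligible_fst_atoms (R : realType) (mu : probability (R * R)%type R) :
  lebesgue_measure.-negligible [set theta : R | mu (fst @^-1` [set theta]) != 0%E].
Proof.
pose X : {RV mu >-> R} := fst.
exists [set r | 0 < pmf X r]; split.
- by apply: countable_measurable (pmf_gt0_countable X) => r; exact: measurable_set1.
- exact: countable_lebesgue_measure0 (pmf_gt0_countable X).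
move=> theta /= atom; rewrite /pmf fine_gt0 // lt0e atom measure_ge0 /=.
by rewrite (le_lt_trans (probability_le1 mu (measurable_fst_preimage1 theta))) ?ltry.
Qed.

Theorem mainTheorem18 (R : realType) (K : R) (hK : 0 < K)
  (mun : nat -> probability (R * R)%type R) (mu : probability (R * R)%type R)
  (hmun : forall n, is_probTR (mun n)) (hmu : is_probTR mu)
  (hcvg : narrow_cvg mun mu) :
  (forall theta : R, theta \in `]-pi, pi] ->
     mu (fst @^-1` [set theta]) = 0%E ->
     (fun n => supdiff K (mun n) mu theta) @ \oo --> 0%E)
  /\
  (lebesgue_measure).-negligible
     [set theta : R | theta \in `]-pi, pi] /\
        ~ ((fun n => supdiff K (mun n) mu theta) @ \oo --> 0%E)].
Proof.
have cvg_at theta : theta \in `]-pi, pi] -> mu (fst @^-1` [set theta]) = 0%E ->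
    (fun n => supdiff K (mun n) mu theta) @ \oo --> 0%E.
  by move=> theta_itv atom0; apply: supdiff_cvg0; exact: narrow_cvg_hcrit_kernel.
split => //; apply: negligibleS (negligible_fst_atoms mu) => theta [theta_itv ncvg] /=.
by apply/eqP => atom0; apply: ncvg; exact: cvg_at.
Qed.
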